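(* Let $\Gamma=F_r$ ($r\ge2$) be the free group, $Y$ its Gromov boundary with the natural $\Gamma$-action, $\{\Gamma_n\}$ a strictly decreasing sequence of finite-index normal subgroups of $\Gamma$ with $\bigcap_n\Gamma_n=\{e_\Gamma\}$, and $Z=\varprojlim\Gamma/\Gamma_n$ with the left translation action of $\Gamma$. Then the product action $\Gamma\curvearrowright Y\times Z$ is minimal.
   Context: $Y$ is the set of infinite reduced words $(x_n)_{n\in\mathbb N}$ in $S\cup S^{-1}$, $S$ a free generating set (i.e. $x_{n+1}\ne x_n^{-1}$), a closed subset of $(S\cup S^{-1})^{\mathbb N}$, with $\Gamma$ acting by concatenation and cancellation. $Z$ is the compact metrizable group of compatible sequences in $\prod_n\Gamma/\Gamma_n$, containing $\Gamma$ as a dense subgroup. *)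

From mathcomp Require Import all_boot.
Set Implicit Arguments. Unset Strict Implicit. Unset Printing Implicit Defensive.

(* Letters of S ∪ S^{-1}: (i, false) = s_i, (i, true) = s_i^{-1}. *)
Definition letter (r : nat) := ('I_r * bool)%type.
Definition linv (r : nat) (a : letter r) : letter r := (a.1, ~~ a.2).

Fixpoint reducedb (r : nat) (w : seq (letter r)) : bool :=
  match w with
  | a :: ((b :: _) as w') => (b != linv a) && reducedb w'
  | _ => true
  end.

Definition push (r : nat) (a : letter r) (s : seq (letter r)) : seq (letter r) :=
  match s with
  | b :: s' => if b == linv a then s' else a :: s
  | [::] => [:: a]
  end.
Definition reduce (r : nat) (w : seq (letter r)) : seq (letter r) :=
  foldr (@push r) [::] w.

Lemma reducedb_tail (r : nat) (b : letter r) s : reducedb (b :: s) -> reducedb s.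
Proof. by case: s => //= c s /andP[]. Qed.

Lemma reduce_reduced (r : nat) (w : seq (letter r)) : reducedb (reduce w).
Proof.
elim: w => [|a w IH] //=; rewrite /push.
case: (reduce w) IH => [|b s] //= IH.
case: ifP => [_|/negbT nb]; first exact: reducedb_tail IH.
by rewrite /= nb IH.
Qed.

Definition FG (r : nat) := {w : seq (letter r) | reducedb w}.
Definition fg_one (r : nat) : FG r := exist _ [::] isT.
Definition fg_mul (r : nat) (g h : FG r) : FG r :=
  exist _ (reduce (sval g ++ sval h)) (reduce_reduced _).
Definition fg_inv (r : nat) (g : FG r) : FG r :=
  exist _ (reduce (rev (map (@linv r) (sval g)))) (reduce_reduced _).

Definition is_subgroup (r : nat) (H : FG r -> Prop) : Prop :=
  H (fg_one r) /\ (forall g h, H g -> H h -> H (fg_mul g h)) /\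
  (forall g, H g -> H (fg_inv g)).
Definition is_normal (r : nat) (H : FG r -> Prop) : Prop :=
  forall g h, H h -> H (fg_mul (fg_mul g h) (fg_inv g)).
Definition finite_index (r : nat) (H : FG r -> Prop) : Prop :=
  exists (n : nat) (t : 'I_n -> FG r), forall g, exists i, H (fg_mul (fg_inv (t i)) g).
Definition strictly_decreasing (r : nat) (Gam : nat -> FG r -> Prop) : Prop :=
  forall n, (forall g, Gam n.+1 g -> Gam n g) /\ (exists g, Gam n g /\ ~ Gam n.+1 g).
Definition trivial_intersection (r : nat) (Gam : nat -> FG r -> Prop) : Prop :=
  forall g, (forall n, Gam n g) -> g = fg_one r.

(* Gromov boundary Y: infinite reduced words *)
Definition in_Y (r : nat) (y : nat -> letter r) : Prop :=
  forall n, y n.+1 != linv (y n).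

Definition prepend (r : nat) (s : seq (letter r)) (y : nat -> letter r) : nat -> letter r :=
  fun n => if n < size s then nth (y 0) s n else y (n - size s).

(* concatenate (reversed word l) with y, cancelling *)
Fixpoint act_rev (r : nat) (l : seq (letter r)) (y : nat -> letter r) : nat -> letter r :=
  match l with
  | a :: l' => if a == linv (y 0) then act_rev l' (fun n => y n.+1) else prepend (rev l) y
  | [::] => y
  end.
Definition actY (r : nat) (g : FG r) (y : nat -> letter r) : nat -> letter r :=
  act_rev (rev (sval g)) y.

(* Z = lim Γ/Γ_n: a point is a sequence of representatives z n of cosets z n Γ_n,
   compatible: z (n+1) Γ_n = z n Γ_n. *)
Definition in_Z (r : nat) (Gam : nat -> FG r -> Prop) (z : nat -> FG r) : Prop :=
  forall n, Gam n (fg_mul (fg_inv (z n)) (z n.+1)).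
Definition actZ (r : nat) (g : FG r) (z : nat -> FG r) : nat -> FG r :=
  fun n => fg_mul g (z n).

(* basic open neighbourhoods of (y', z') in Y × Z (product topology):
   first k letters agree with y', and level-m coset equals z' m Γ_m *)
Definition in_basic_nbhd (r : nat) (Gam : nat -> FG r -> Prop)
  (y' : nat -> letter r) (z' : nat -> FG r) (k m : nat)
  (y : nat -> letter r) (z : nat -> FG r) : Prop :=
  (forall i, i < k -> y i = y' i) /\ Gam m (fg_mul (fg_inv (z m)) (z' m)).

(* minimality: every orbit of Γ on Y × Z is dense *)
Definition minimal_YZ (r : nat) (Gam : nat -> FG r -> Prop) : Prop :=
  forall y z, in_Y y -> in_Z Gam z ->
  forall y' z', in_Y y' -> in_Z Gam z' ->
  forall k m, exists g : FG r, in_basic_nbhd Gam y' z' k m (actY g y) (actZ g z).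

(* Given a target (y', z') and levels k, m, let w be the first k letters of y' and
   x = w^-1 z'_m z_m^-1, and put g = w a^N x b^M where a^N and b^M lie in Gamma_m
   (a finite-index subgroup contains a power of every element) and N, M > |x|.
   Modulo the normal subgroup Gamma_m, g = w x = z'_m z_m^-1, so g z_m lies in z'_m Gamma_m.
   The long powers cannot be cancelled away by x, and since r >= 2 the letters a, b can
   be chosen so that nothing cancels against w on the left nor against y on the right:
   the reduced word of g is w a ... b, and g y begins with w.  Only normality and finite
   index of the Gamma_m are used. *)

From mathcomp Require Import all_boot zify.
Set Implicit Arguments. Unset Strict Implicit. Unset Printing Implicit Defensive.

Section ReducedWords.
Variable r : nat.
Implicit Types (a b c : letter r) (u v s t w x : seq (letter r)).

Local Notation winv u := (rev (map (@linv r) u)).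

Lemma linvK a : linv (linv a) = a.
Proof. by case: a => i e; rewrite /linv /= negbK. Qed.

Lemma neq_linv a : (a == linv a) = false.
Proof. by case: a => i []; rewrite /linv xpair_eqE /= andbF. Qed.

Lemma winvK u : winv (winv u) = u.
Proof.
by rewrite map_rev revK -map_comp (eq_map (g := id)) ?map_id // => a /=; rewrite linvK.
Qed.

Lemma winv_nseq n a : winv (nseq n a) = nseq n (linv a).
Proof. by rewrite map_nseq rev_nseq. Qed.

Lemma reducedbE s : reducedb s = sorted (fun a b => b != linv a) s.
Proof. by elim: s => // a [|b s] //= ->. Qed.

Lemma nseq_reduced n a : reducedb (nseq n a).
Proof. by elim: n => // [[|n]] //= ->; rewrite neq_linv. Qed.

Lemma reducedb_cat u a v : reducedb u -> reducedb (a :: v) ->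
  a != linv (last a u) -> reducedb (u ++ a :: v).
Proof.
by case: u => [|b u] //; rewrite !reducedbE /= cat_path => -> /= -> ->.
Qed.

Lemma push_reduced a s : reducedb s -> reducedb (push a s).
Proof.
case: s => [|b s] //= s_red.
case: ifP => [_|/negbT b_a]; first exact: reducedb_tail s_red.
by rewrite /= b_a s_red.
Qed.

Lemma reduce_id s : reducedb s -> reduce s = s.
Proof.
elim: s => // a s IH s_red /=; rewrite IH; last exact: reducedb_tail s_red.
by case: s s_red {IH} => //= b s /andP[/negbTE ->].
Qed.

Lemma pushK a s : reducedb s -> push a (push (linv a) s) = s.
Proof.
case: s => [|b s] /=; first by rewrite eqxx.
case: ifP => [/eqP|_ _]; last by rewrite /= eqxx.
by rewrite linvK => <-; case: s => [|c s] //= /andP[/negbTE ->].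
Qed.

Lemma reduce_cat u v : reduce (u ++ v) = foldr (@push r) (reduce v) u.
Proof. by rewrite /reduce foldr_cat. Qed.

Lemma foldr_push_reduce u s : reducedb s ->
  foldr (@push r) s (reduce u) = foldr (@push r) s u.
Proof.
move=> s_red.
have push_red u' : reducedb (foldr (@push r) s u').
  by elim: u' => //= a u' /push_reduced.
elim: u => //= a u <-.
case: (reduce u) (reduce_reduced u) => [|b t] //= t_red.
by case: ifP => [/eqP ->|] //=; rewrite pushK.
Qed.

Lemma reduce_catr u v : reduce (u ++ reduce v) = reduce (u ++ v).
Proof. by rewrite !reduce_cat reduce_id // reduce_reduced. Qed.

Lemma reduce_catl u v : reduce (reduce u ++ v) = reduce (u ++ v).
Proof. by rewrite !reduce_cat foldr_push_reduce // reduce_reduced. Qed.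

Lemma reduce_winv_cat u v : reduce (winv u ++ u ++ v) = reduce v.
Proof.
elim: u => //= a u IH.
rewrite rev_cons -cats1 -catA /= reduce_cat /= -{2}(linvK a).
by rewrite pushK ?reduce_reduced // -reduce_cat.
Qed.

Lemma reduce_cat_winv u v : reduce (u ++ winv u ++ v) = reduce v.
Proof. by rewrite -{1}(winvK u) reduce_winv_cat. Qed.

Lemma reduce_cat_split u v : reducedb u -> reducedb v ->
  exists u1 s v1, [/\ u = u1 ++ s, v = winv s ++ v1 & reduce (u ++ v) = u1 ++ v1].
Proof.
move=> + v_red; elim: u => [|a u IH] u_red.
  by exists [::], [::], v; rewrite reduce_id.
have [u1 [s [v1 [uE vE rE]]]] := IH (reducedb_tail u_red).
rewrite cat_cons /= rE {rE}.
case: u1 uE => [|c u1] uE /=; last first.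
  have /negbTE -> : c != linv a by move: u_red; rewrite uE => /andP[].
  by exists [:: a, c & u1], s, v1; rewrite uE.
case: v1 vE => [|d v1] vE /=; first by exists [:: a], s, [::]; rewrite uE.
case: ifP => [/eqP da|_]; last by exists [:: a], s, (d :: v1); rewrite uE.
exists [::], (a :: s), v1; split => //; first by rewrite uE.
by rewrite vE rev_cons /= cat_rcons da.
Qed.

Lemma nseq_eq_cat n a u v : nseq n a = u ++ v ->
  u = nseq (size u) a /\ v = nseq (n - size u) a.
Proof.
move=> nE; split; last by rewrite -(drop_size_cat v (erefl (size u))) -nE drop_nseq.
by apply/all_pred1P; move: (all_pred1_nseq a n); rewrite nE all_cat => /andP[].
Qed.

Lemma reduce_cat_nseq n a u : reducedb u ->
  exists u1 p, u = u1 ++ nseq p (linv a) /\ reduce (u ++ nseq n a) = u1 ++ nseq (n - p) a.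
Proof.
move=> u_red; have [u1 [s [v1 [uE nE ->]]]] := reduce_cat_split u_red (nseq_reduced n a).
have [sE v1E] := nseq_eq_cat nE.
exists u1, (size s); rewrite v1E size_rev size_map; split => //.
by rewrite uE -{1}(winvK s) sE winv_nseq size_rev size_map.
Qed.

Lemma reduce_nseq_cat n a v : reducedb v ->
  exists q v1, [/\ q <= n, v = nseq q (linv a) ++ v1
                 & reduce (nseq n a ++ v) = nseq (n - q) a ++ v1].
Proof.
move=> v_red; have [u1 [s [v1 [nE vE ->]]]] := reduce_cat_split (nseq_reduced n a) v_red.
have [u1E sE] := nseq_eq_cat nE.
have le_u1n : size u1 <= n by rewrite -(size_nseq n a) nE size_cat leq_addr.
exists (n - size u1), v1; rewrite leq_subr subKn // -u1E.
by rewrite vE sE winv_nseq.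
Qed.

Lemma nseq_prefix_size q a v u b t : nseq q a ++ v = u ++ b :: t -> b != a ->
  q <= size u.
Proof.
move=> E; apply: contraR; rewrite -ltnNge => lt_uq.
move/(congr1 (nth b ^~ (size u))): E.
by rewrite !nth_cat size_nseq lt_uq nth_nseq lt_uq ltnn subnn => ->.
Qed.

Lemma reduce_nseq_sandwich x a b na nb : reducedb x -> size x < na -> size x < nb ->
  b != linv a -> exists v, reduce (nseq na a ++ reduce (x ++ nseq nb b)) = a :: rcons v b.
Proof.
move=> x_red lt_x_na lt_x_nb b_a.
(* x cancels at most |x| letters of each power, and the a's cannot reach past a b. *)
have [x1 [p [xE R1E]]] := reduce_cat_nseq nb b x_red.
have le_x1 : size x1 <= size x by rewrite xE size_cat leq_addr.
have [j jE] : exists j, nb - p = j.+1.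
  by exists (nb - p).-1; move/(congr1 size): xE; rewrite size_cat size_nseq; lia.
have nseqSr c n : nseq n.+1 c = rcons (nseq n c) c by elim: n => //= n ->.
have x_b_red : reducedb (x1 ++ nseq j.+1 b) by rewrite -jE -R1E reduce_reduced.
rewrite R1E jE.
have [q [v1 [_ v1E ->]]] := reduce_nseq_cat na a x_b_red.
have le_q_x1 : q <= size x1 := nseq_prefix_size (esym v1E) b_a.
have [i iE] : exists i, na - q = i.+1 by exists (na - q).-1; lia.
rewrite iE; move: v1E; rewrite nseqSr; case/lastP: v1 => [|v c] v1E.
  move/(congr1 size): v1E; rewrite cats0 !size_cat size_rcons !size_nseq.
  by move=> ?; exfalso; lia.
have /= cb := congr1 (last b) v1E; rewrite !last_cat !last_rcons in cb.
by exists (nseq i a ++ v); rewrite cb rcons_cat.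
Qed.

End ReducedWords.

Section FreeGroup.
Variable r : nat.
Implicit Types (g h k t : FG r) (H : FG r -> Prop).

Lemma fg_val_inj g h : sval g = sval h -> g = h.
Proof.
by case: g h => [u u_red] [v v_red] /= uv; subst v; rewrite (bool_irrelevance u_red v_red).
Qed.

Lemma fg_mulA g h k : fg_mul (fg_mul g h) k = fg_mul g (fg_mul h k).
Proof. by apply: fg_val_inj => /=; rewrite reduce_catl reduce_catr catA. Qed.

Lemma fg_mul1g g : fg_mul (fg_one r) g = g.
Proof. by apply: fg_val_inj; rewrite /= reduce_id //; case: g. Qed.

Lemma fg_mulg1 g : fg_mul g (fg_one r) = g.
Proof. by apply: fg_val_inj; rewrite /= cats0 reduce_id //; case: g. Qed.

Lemma fg_mulVg g : fg_mul (fg_inv g) g = fg_one r.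
Proof.
apply: fg_val_inj; rewrite /= reduce_catl.
by have := reduce_winv_cat (sval g) [::]; rewrite cats0.
Qed.

Lemma fg_mulgV g : fg_mul g (fg_inv g) = fg_one r.
Proof.
apply: fg_val_inj; rewrite /= reduce_catr.
by have := reduce_cat_winv (sval g) [::]; rewrite cats0.
Qed.

Lemma fg_inv_uniq g h : fg_mul g h = fg_one r -> h = fg_inv g.
Proof. by move=> gh; rewrite -(fg_mul1g h) -(fg_mulVg g) fg_mulA gh fg_mulg1. Qed.

Lemma fg_invK g : fg_inv (fg_inv g) = g.
Proof. by symmetry; apply: fg_inv_uniq; rewrite fg_mulVg. Qed.

Lemma fg_invM g h : fg_inv (fg_mul g h) = fg_mul (fg_inv h) (fg_inv g).
Proof.
by symmetry; apply: fg_inv_uniq; rewrite fg_mulA -(fg_mulA h) fg_mulgV fg_mul1g fg_mulgV.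
Qed.

Lemma subgroup_coset_eq H t g h : is_subgroup H ->
  H (fg_mul (fg_inv t) g) -> H (fg_mul (fg_inv t) h) -> H (fg_mul (fg_inv g) h).
Proof.
move=> [_ [H_mul H_inv]] /H_inv Htg /(H_mul _ _ Htg).
by rewrite fg_invM fg_invK fg_mulA -(fg_mulA t) fg_mulgV fg_mul1g.
Qed.

Lemma normal_cancel_factors H g x h h' : is_subgroup H -> is_normal H -> H h -> H h' ->
  H (fg_mul (fg_inv (fg_mul g (fg_mul h (fg_mul x h')))) (fg_mul g x)).
Proof.
move=> [_ [H_mul H_inv]] H_norm /H_inv/(H_norm (fg_inv x)) Hxh /H_inv Hh'.
rewrite fg_invK in Hxh.
have := H_mul _ _ Hh' Hxh.
by rewrite !fg_invM !fg_mulA -(fg_mulA (fg_inv g)) fg_mulVg fg_mul1g.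
Qed.

Definition letter_pow (a : letter r) n : FG r := exist _ (nseq n a) (nseq_reduced n a).

Lemma letter_powD a i j : fg_mul (letter_pow a i) (letter_pow a j) = letter_pow a (i + j).
Proof. by apply: fg_val_inj; rewrite /= -nseqD reduce_id // nseq_reduced. Qed.

Lemma subgroup_letter_powM H a e n : is_subgroup H ->
  H (letter_pow a e) -> H (letter_pow a (e * n)).
Proof.
move=> [H_one [H_mul _]] Hae; elim: n => [|n IH].
  by rewrite muln0 (_ : letter_pow a 0 = fg_one r) //; apply: fg_val_inj.
by rewrite mulnS -letter_powD; apply: H_mul.
Qed.

Lemma finite_index_letter_pow H a : is_subgroup H -> finite_index H ->
  exists2 e, 0 < e & H (letter_pow a e).
Proof.
move=> H_sub [n [t Ht]].
have /fin_all_exists[f Hf] :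
    forall j : 'I_n.+1, exists i, H (fg_mul (fg_inv (t i)) (letter_pow a j)) by [].
have /injectivePn[i [j ij fij]] : ~~ injectiveb f.
  by apply/injectiveP => /leq_card; rewrite !card_ord ltnn.
wlog lt_ij : i j ij fij / i < j.
  move=> W; case: (ltngtP i j) => [|lt_ji|/val_inj eq_ij]; first exact: W.
    by apply: (W j i) => //; rewrite eq_sym.
  by rewrite eq_ij eqxx in ij.
exists (j - i); first by rewrite subn_gt0.
have := subgroup_coset_eq H_sub (Hf i); rewrite fij => /(_ _ (Hf j)).
by rewrite -{1}(subnKC (ltnW lt_ij)) -letter_powD -fg_mulA fg_mulVg fg_mul1g.
Qed.

Lemma finite_index_large_letter_pow H a N : is_subgroup H -> finite_index H ->
  exists2 n, N < n & H (letter_pow a n).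
Proof.
move=> H_sub /(finite_index_letter_pow a H_sub)[e e_gt0 Hae].
by exists (e * N.+1); [rewrite leq_pmull | apply: subgroup_letter_powM].
Qed.

Lemma sval_mul_letter_pows w x a b na nb :
  size (sval x) < na -> size (sval x) < nb -> b != linv a -> a != linv (last a (sval w)) ->
  exists v, sval (fg_mul w (fg_mul (letter_pow a na) (fg_mul x (letter_pow b nb))))
            = sval w ++ rcons (a :: v) b.
Proof.
move=> lt_x_na lt_x_nb b_a a_w.
have [v vE] := reduce_nseq_sandwich (proj2_sig x) lt_x_na lt_x_nb b_a.
exists v; rewrite /= vE reduce_id //.
by apply: reducedb_cat; rewrite ?(proj2_sig w) // -vE reduce_reduced.
Qed.

End FreeGroup.

Lemma mkseq_reduced r (y : nat -> letter r) k : in_Y y -> reducedb (mkseq y k).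
Proof.
by move=> y_red; rewrite /mkseq; elim: k 0 => // [[|k]] IH i //=; rewrite y_red; apply: IH.
Qed.

Lemma actY_prefix r (g : FG r) y u v b : sval g = u ++ rcons v b -> b != linv (y 0) ->
  forall i, i < size u -> actY g y i = nth (y 0) u i.
Proof.
move=> gE b_y i lt_iu.
rewrite /actY gE -rcons_cat rev_rcons /= (negbTE b_y) /prepend rev_cons revK size_rcons.
rewrite size_cat ltnS (leq_trans (ltnW lt_iu)) ?leq_addr // nth_rcons size_cat.
by rewrite ltn_addr // nth_cat lt_iu.
Qed.

Lemma other_index r (i : 'I_r) : 2 <= r -> exists j : 'I_r, j != i.
Proof.
move=> r_ge2; have r_gt0 := ltnW r_ge2.
have [i0|i_neq0] := eqVneq (val i) 0.
  by exists (Ordinal r_ge2); rewrite -val_eqE /= i0.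
by exists (Ordinal r_gt0); rewrite -val_eqE /= eq_sym.
Qed.

Theorem lemma5p1 (r : nat) (Gam : nat -> FG r -> Prop) :
  2 <= r ->
  (forall n, is_subgroup (Gam n)) ->
  (forall n, is_normal (Gam n)) ->
  (forall n, finite_index (Gam n)) ->
  strictly_decreasing Gam ->
  trivial_intersection Gam ->
  minimal_YZ Gam.
Proof.
move=> r_ge2 Gam_sub Gam_norm Gam_fin _ _ y z _ _ y' z' y'_red _ k m.
pose W : FG r := exist _ (mkseq y' k) (mkseq_reduced k y'_red).
pose X := fg_mul (fg_inv W) (fg_mul (z' m) (fg_inv (z m))).
have [ia ia_neq] := other_index (last (y 0) (sval W)).1 r_ge2.
have [ib ib_neq] := other_index (y 0).1 r_ge2.
pose a : letter r := (ia, false); pose b : letter r := (ib, false).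
have large_pow c := finite_index_large_letter_pow c (size (sval X)) (Gam_sub m) (Gam_fin m).
have [[na lt_X_na Gam_a] [nb lt_X_nb Gam_b]] := (large_pow a, large_pow b).
set g := fg_mul W (fg_mul (letter_pow a na) (fg_mul X (letter_pow b nb))).
exists g; split.
- have b_a : b != linv a by rewrite /linv xpair_eqE andbF.
  have a_W : a != linv (last a (sval W)).
    case/lastP: (sval W) ia_neq => [_|w c]; first by rewrite neq_linv.
    by rewrite !last_rcons /linv xpair_eqE eq_sym => /negbTE ->.
  have [v gE] := sval_mul_letter_pows lt_X_na lt_X_nb b_a a_W.
  have b_y : b != linv (y 0) by rewrite /linv xpair_eqE (negbTE ib_neq).
  by move=> i lt_ik; rewrite (actY_prefix gE b_y) ?size_mkseq // nth_mkseq.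
- have WX : fg_mul W X = fg_mul (z' m) (fg_inv (z m)).
    by rewrite /X -fg_mulA fg_mulgV fg_mul1g.
  have := normal_cancel_factors W X (Gam_sub m) (Gam_norm m) Gam_a Gam_b.
  rewrite -/g WX; clearbody g => /(Gam_norm m (fg_inv (z m))).
  by rewrite /actZ fg_invK fg_invM !fg_mulA fg_mulVg fg_mulg1.
Qed.
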